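(* Let $N=\{1,\dots,n\}$, let $\tilde Q\in\mathbb{R}^{n\times n}$ be symmetric positive definite, $\tilde d\in\mathbb{R}^n$, and $a,b\in\mathbb{R}^n$ with $b\le a$ componentwise. Let $A,B\subseteq N$ be disjoint, $I=N\setminus(A\cup B)$, and let $(x,s,t)$ be the KKT solution for $(A,B)$. Let $C=\{i: x_i<b_i \text{ or } s_i<0\}$, $D=\{i: x_i>a_i \text{ or } t_i>0\}$, and let $(y,u,v)$ be the KKT solution for $(C,D)$. Let $U=\{i\in I: x_i<b_i\}$, $V=\{i\in I: x_i>a_i\}$, $W=U\cup V$, $\overline W=N\setminus W$ and $z=y-x$. Then $$\tilde J(y)-\tilde J(x)=\tfrac12\, z_W^{\top}\tilde Q_W z_W-\tfrac12\, z_{\overline W}^{\top}\tilde Q_{\overline W} z_{\overline W},$$ where $\tilde J(w)=\tfrac12 w^{\top}\tilde Q w+\tilde d^{\top}w$.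
   Context: For disjoint $A_1,A_2\subseteq N$, the KKT solution for $(A_1,A_2)$ is the unique triple $(x,s,t)\in(\mathbb{R}^n)^3$ with $x_{A_1}=b_{A_1}$, $x_{A_2}=a_{A_2}$, $s_i=0$ for $i\notin A_1$, $t_i=0$ for $i\notin A_2$, and $\tilde Qx+\tilde d+s+t=0$ (unique since $\tilde Q\succ0$). The sets $C$ and $D$ defined in the claim are disjoint. For $M\subseteq N$, $z_M$ denotes the subvector of $z$ indexed by $M$ and $\tilde Q_M$ the principal submatrix of $\tilde Q$ indexed by $M$. *)

From HB Require Import structures.
From mathcomp Require Import all_boot all_order all_algebra.
Set Implicit Arguments. Unset Strict Implicit. Unset Printing Implicit Defensive.
Import Order.TTheory GRing.Theory Num.Theory.
Local Open Scope ring_scope.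

Definition symmetric_mx (R : pzRingType) (n : nat) (Q : 'M[R]_n) : Prop := Q^T = Q.

Definition posdef_mx (R : realFieldType) (n : nat) (Q : 'M[R]_n) : Prop :=
  forall w : 'cV[R]_n, w != 0 -> 0 < (w^T *m Q *m w) 0 0.

(* (x,s,t) is the KKT solution for the disjoint pair (A1,A2):
   x_{A1} = b_{A1}, x_{A2} = a_{A2}, s_i = 0 off A1, t_i = 0 off A2,
   Q x + d + s + t = 0. (Unique since Q is positive definite.) *)
Definition is_KKT_solution (R : realFieldType) (n : nat) (Q : 'M[R]_n)
    (d a b : 'cV[R]_n) (A1 A2 : {set 'I_n}) (x s t : 'cV[R]_n) : Prop :=
  [/\ forall i, i \in A1 -> x i 0 = b i 0,
      forall i, i \in A2 -> x i 0 = a i 0,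
      forall i, i \notin A1 -> s i 0 = 0,
      forall i, i \notin A2 -> t i 0 = 0
    & Q *m x + d + s + t = 0].

Definition Jfun (R : realFieldType) (n : nat) (Q : 'M[R]_n) (d w : 'cV[R]_n) : R :=
  2^-1 * (w^T *m Q *m w) 0 0 + (d^T *m w) 0 0.

Definition subquad (R : realFieldType) (n : nat) (Q : 'M[R]_n) (M : {set 'I_n})
    (z : 'cV[R]_n) : R :=
  \sum_(i in M) \sum_(j in M) z i 0 * Q i j * z j 0.

From HB Require Import structures.
From mathcomp Require Import all_boot all_order all_algebra.
From mathcomp Require Import ring lra.
Set Implicit Arguments. Unset Strict Implicit. Unset Printing Implicit Defensive.
Import Order.TTheory GRing.Theory Num.Theory.
Local Open Scope ring_scope.

(* With z = y - x, the two stationarity equations give Q z = (s + t) - (u + v)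
   and J(y) - J(x) = 1/2 z^T Q z - z^T (s + t).  The multipliers s, t vanish on
   W, while off W either z_i = 0 or the new multipliers u_i, v_i vanish, so
   z^T (s + t) is the sum of z_i (Q z)_i over the complement of W.  Splitting
   z^T Q z along W and its complement, the mixed terms cancel by symmetry of Q. *)

Lemma sumr_setC {T : finType} {V : nmodType} (M : {set T}) (f : T -> V) :
  \sum_i f i = \sum_(i in M) f i + \sum_(i in ~: M) f i.
Proof.
rewrite (bigID (mem M)) /=; congr (_ + _).
by apply: eq_bigl => i; rewrite in_setC.
Qed.

Lemma mx11_trmx (T : Type) (M : 'M[T]_1) : M^T = M.
Proof. by apply/matrixP => i j; rewrite !ord1 mxE. Qed.

Lemma dot_cVE (R : pzSemiRingType) (n : nat) (z w : 'cV[R]_n) :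
  (z^T *m w) 0 0 = \sum_i z i 0 * w i 0.
Proof. by rewrite mxE; apply: eq_bigr => i _; rewrite mxE. Qed.

Section QuadraticForm.
Variables (R : realFieldType) (n : nat) (Q : 'M[R]_n).
Hypothesis symQ : Q^T = Q.

Lemma quad_formE (z : 'cV[R]_n) :
  (z^T *m Q *m z) 0 0 = \sum_i z i 0 * (Q *m z) i 0.
Proof. by rewrite -mulmxA dot_cVE. Qed.

Lemma Jfun_sub (d x y : 'cV[R]_n) :
  Jfun Q d y - Jfun Q d x =
  ((y - x)^T *m (Q *m x + d)) 0 0 + 2^-1 * ((y - x)^T *m Q *m (y - x)) 0 0.
Proof.
rewrite -{1}(subrK x y) [_ + x]addrC; move: (y - x) => z.
have xQz : x^T *m Q *m z = z^T *m Q *m x.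
  by rewrite -[LHS]mx11_trmx !trmx_mul trmxK symQ mulmxA.
have dz : d^T *m z = z^T *m d by rewrite -[LHS]mx11_trmx trmx_mul trmxK.
have entryD (A B : 'M[R]_1) : (A + B) 0 0 = A 0 0 + B 0 0 by rewrite mxE.
rewrite /Jfun (raddfD (@trmx R n 1)) !mulmxDl !mulmxDr xQz dz !mulmxA !entryD.
by field.
Qed.

Lemma sum_quad_setC_sub (M : {set 'I_n}) (z : 'cV[R]_n) :
  \sum_(i in M) z i 0 * (Q *m z) i 0 - \sum_(i in ~: M) z i 0 * (Q *m z) i 0 =
  subquad Q M z - subquad Q (~: M) z.
Proof.
have split_row (N : {set 'I_n}) i : z i 0 * (Q *m z) i 0 =
    \sum_(j in N) z i 0 * Q i j * z j 0 + \sum_(j in ~: N) z i 0 * Q i j * z j 0.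
  rewrite mxE big_distrr (bigID (mem N)) /=; congr (_ + _).
    by apply: eq_bigr => j _; rewrite mulrA.
  by apply: eq_big => [j|j _]; rewrite ?in_setC ?mulrA.
have cross : \sum_(i in M) \sum_(j in ~: M) z i 0 * Q i j * z j 0 =
             \sum_(i in ~: M) \sum_(j in M) z i 0 * Q i j * z j 0.
  rewrite exchange_big; apply: eq_bigr => i _; apply: eq_bigr => j _.
  have -> : Q j i = Q i j by rewrite -{1}symQ mxE.
  ring.
under [X in X - _]eq_bigr => i _ do rewrite (split_row M i).
under [X in _ - X]eq_bigr => i _ do rewrite (split_row (~: M) i).
rewrite !big_split /= setCK.
by rewrite /subquad cross; ring.
Qed.

Lemma Jfun_sub_subquad (d x y s t u v : 'cV[R]_n) (M : {set 'I_n}) :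
  Q *m x + d + s + t = 0 -> Q *m y + d + u + v = 0 ->
  {in M, forall i, s i 0 + t i 0 = 0} ->
  {in ~: M, forall i, (y - x) i 0 * (u i 0 + v i 0) = 0} ->
  Jfun Q d y - Jfun Q d x =
  2^-1 * subquad Q M (y - x) - 2^-1 * subquad Q (~: M) (y - x).
Proof.
move=> statx staty stM compl.
have Qxd : Q *m x + d = - (s + t) by apply/eqP; rewrite -addr_eq0 addrA statx.
have Qz i : (Q *m (y - x)) i 0 = s i 0 + t i 0 - (u i 0 + v i 0).
  have Qyd : Q *m y + d = - (u + v) by apply/eqP; rewrite -addr_eq0 addrA staty.
  have -> : Q *m (y - x) = (Q *m y + d) - (Q *m x + d).
    by rewrite mulmxBr opprD addrACA subrr addr0.
  by rewrite Qyd Qxd !mxE; ring.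
have multipliers : ((y - x)^T *m (Q *m x + d)) 0 0 =
    - \sum_(i in ~: M) (y - x) i 0 * (Q *m (y - x)) i 0.
  rewrite Qxd dot_cVE (sumr_setC M) big1 ?add0r => [|i iM]; last first.
    by rewrite !mxE stM // oppr0 mulr0.
  rewrite -sumrN; apply: eq_bigr => i iM.
  by rewrite Qz mulrBr compl // subr0 !mxE; ring.
rewrite Jfun_sub multipliers quad_formE (sumr_setC M).
have := sum_quad_setC_sub M (y - x); lra.
Qed.

End QuadraticForm.

Section KKTPair.
Variables (R : realFieldType) (n : nat) (Q : 'M[R]_n) (d a b : 'cV[R]_n).
Variables (A B : {set 'I_n}) (x s t y u v : 'cV[R]_n).
Hypothesis le_ba : forall i, b i 0 <= a i 0.
Hypothesis KKTx : is_KKT_solution Q d a b A B x s t.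

Local Notation C := [set i | (x i 0 < b i 0) || (s i 0 < 0)].
Local Notation D := [set i | (x i 0 > a i 0) || (t i 0 > 0)].
Local Notation I := (~: (A :|: B)).
Local Notation W :=
  ([set i in I | x i 0 < b i 0] :|: [set i in I | x i 0 > a i 0]).

Hypothesis KKTy : is_KKT_solution Q d a b C D y u v.

Lemma KKT_multipliers_eq0 i : i \in W -> s i 0 = 0 /\ t i 0 = 0.
Proof.
case: KKTx => _ _ sA tB _; rewrite !inE negb_or.
by case/orP => /andP [/andP [iA iB] _]; rewrite sA // tB.
Qed.

Lemma KKT_lower_active i : i \in C -> i \notin W -> x i 0 = b i 0.
Proof.
case: KKTx => xA xB sA _ _; case: (boolP (i \in A)) => [/xA //|iA].
rewrite inE sA // ltxx orbF => xb; case: (boolP (i \in B)) => [iB|iB].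
  by have := le_ba i; rewrite -xB //; lra.
by rewrite !inE (negbTE iA) (negbTE iB) xb.
Qed.

Lemma KKT_upper_active i : i \in D -> i \notin W -> x i 0 = a i 0.
Proof.
case: KKTx => xA xB _ tB _; case: (boolP (i \in B)) => [/xB //|iB].
rewrite inE tB // ltxx orbF => ax; case: (boolP (i \in A)) => [iA|iA].
  by have := le_ba i; rewrite -xA //; lra.
by rewrite !inE (negbTE iA) (negbTE iB) ax orbT.
Qed.

Lemma KKT_complementary i : i \notin W -> (y - x) i 0 * (u i 0 + v i 0) = 0.
Proof.
case: KKTy => yC yD uC vD _ iW; rewrite !mxE.
case: (boolP (i \in C)) => [iC|iC].
  by rewrite yC // KKT_lower_active // subrr mul0r.
case: (boolP (i \in D)) => [iD|iD].
  by rewrite yD // KKT_upper_active // subrr mul0r.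
by rewrite uC // vD // addr0 mulr0.
Qed.

End KKTPair.

Theorem mainTheorem1 (R : realFieldType) (n : nat) (Q : 'M[R]_n)
    (d a b : 'cV[R]_n) (A B : {set 'I_n}) (x s t y u v : 'cV[R]_n) :
  symmetric_mx Q -> posdef_mx Q ->
  (forall i, b i 0 <= a i 0) ->
  [disjoint A & B] ->
  is_KKT_solution Q d a b A B x s t ->
  let I := ~: (A :|: B) in
  let C := [set i | (x i 0 < b i 0) || (s i 0 < 0)] in
  let D := [set i | (x i 0 > a i 0) || (t i 0 > 0)] in
  is_KKT_solution Q d a b C D y u v ->
  let U := [set i in I | x i 0 < b i 0] in
  let V := [set i in I | x i 0 > a i 0] in
  let W := U :|: V in
  let Wbar := ~: W in
  let z := y - x in
  Jfun Q d y - Jfun Q d x = 2^-1 * subquad Q W z - 2^-1 * subquad Q Wbar z.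
Proof.
(* Positive definiteness and disjointness of A and B only make the KKT
   solutions well defined; the identity itself does not use them. *)
move=> symQ _ le_ba _ KKTx I C D KKTy U V W Wbar z.
have [_ _ _ _ statx] := KKTx; have [_ _ _ _ staty] := KKTy.
apply: (Jfun_sub_subquad symQ statx staty) => i.
- by move=> /(KKT_multipliers_eq0 KKTx) [-> ->]; rewrite addr0.
- by rewrite in_setC; exact: (KKT_complementary le_ba KKTx KKTy).
Qed.
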